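(* For every finite graph $G$ and every pair of positive integers $g,k$, there exist a finite graph $G'$ with girth at least $g$ and a surjective homomorphism $h:V(G')\to V(G)$ such that for every proper $k$-colouring $c'$ of $G'$ there is a proper $k$-colouring $c$ of $G$ with $c(v)\in c'(h^{-1}(v))$ for all $v\in V(G)$. In particular $\chi(G')=\chi(G)$.
   Context: A homomorphism from $G'$ to $G$ is a map $h:V(G')\to V(G)$ such that $uv\in E(G')$ implies $h(u)h(v)\in E(G)$. A proper $k$-colouring is a map to $\{1,\dots,k\}$ giving adjacent vertices different colours. For a set $A$ of vertices, $c'(A)$ denotes the set of colours used on $A$. The girth of a graph is the length of its shortest cycle (infinite if acyclic). *)

From mathcomp Require Import all_boot.
Set Implicit Arguments. Unset Strict Implicit. Unset Printing Implicit Defensive.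

Definition simple_graph (T : finType) (e : rel T) : Prop :=
  symmetric e /\ irreflexive e.

Definition is_cycle (T : finType) (e : rel T) (s : seq T) : Prop :=
  match s with
  | [::] => False
  | x :: s' => 3 <= size s /\ uniq s /\ path e x s' /\ e (last x s') x
  end.

Definition girth_at_least (T : finType) (e : rel T) (g : nat) : Prop :=
  forall s : seq T, is_cycle e s -> g <= size s.

Definition is_hom (T' T : finType) (e' : rel T') (e : rel T) (h : T' -> T) : Prop :=
  forall u v, e' u v -> e (h u) (h v).

Definition proper_colouring (T : finType) (e : rel T) (k : nat) (c : T -> 'I_k) : Prop :=
  forall u v, e u v -> c u != c v.

Definition colourable (T : finType) (e : rel T) (k : nat) : Prop :=
  exists c : T -> 'I_k, proper_colouring e c.

Definition chromatic_number (T : finType) (e : rel T) (chi : nat) : Prop :=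
  colourable e chi /\ forall k, colourable e k -> chi <= k.

From mathcomp Require Import all_boot zify.
Set Implicit Arguments. Unset Strict Implicit. Unset Printing Implicit Defensive.

(* Blow every vertex of G up into N levels and add M random "copies" of G: copy i
   joins, for every arc a = (u, v) of G, the vertex u on level w i (a, false) to the
   vertex v on level w i (a, true).  Deleting every level met by a cycle shorter than g
   leaves a graph of girth at least g mapping onto G by the second projection.
   Counting the templates w shows that for M proportional to N some w has at most N/2
   levels on short cycles (a closed walk of length L occurs in a fraction N^-L of the
   templates) and has a whole copy inside every set of s levels (a copy misses a fixed
   such set with probability 1 - (s/N)^c, c the number of ends of arcs).  Given a
   k-colouring of the blow-up, the pigeonhole principle gives s kept levels with the
   same colour pattern, and the copy inside them pulls the colouring back to G. *)

Lemma leq_wexp2r m n e : m <= n -> m ^ e <= n ^ e.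
Proof. by case: e => // e; rewrite leq_exp2r. Qed.

Lemma bernoulli_nat x n : x ^ n * (x + n) <= x * (x + 1) ^ n.
Proof.
elim: n => [|n IHn]; first by rewrite !expn0; lia.
have : x ^ n <= (x + 1) ^ n by apply: leq_wexp2r; rewrite leq_addr.
rewrite !expnS; nia.
Qed.

Lemma double_expn_leq x : 2 * x ^ x.+1 <= x.+1 ^ x.+1.
Proof.
case: x => [|x]; first by [].
have := bernoulli_nat x.+1 x.+2; rewrite addn1 -(leq_pmul2l (ltn0Sn x)); nia.
Qed.

(* With D = x.+1, this says (1 - 1/D)^(2 D N) < 2^-(N+1). *)
Lemma expn_decay_lt x N : 2 <= N -> 2 * 2 ^ N * x ^ (2 * x.+1 * N) < x.+1 ^ (2 * x.+1 * N).
Proof.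
move=> N2; have -> : 2 * x.+1 * N = x.+1 * (2 * N) by lia.
rewrite (expnM x) (expnM x.+1).
have := leq_wexp2r (2 * N) (double_expn_leq x).
have : 0 < x.+1 ^ x.+1 by rewrite expn_gt0.
move: (x ^ x.+1) (x.+1 ^ x.+1) => a b b0.
have : 0 < b ^ (2 * N) by rewrite expn_gt0 b0.
have : 2 ^ 2 <= 2 ^ N by rewrite leq_pexp2l.
rewrite expnMn !(mulnC 2 N) !expnM; move: (a ^ N) (b ^ N) (2 ^ N) => A B P.
nia.
Qed.

Lemma ordS2_neq L (a : 'I_L) : 2 < L -> ordS (ordS a) != a.
Proof.
move=> L3; apply/eqP => /(congr1 val) /=.
rewrite -addn1 modnDml -[X in _ = X](modn_small (ltn_ord a)) => /eqP.
rewrite addn1 -addn2 -[X in _ == X %[mod _]]addn0 eqn_modDl.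
by rewrite !modn_small //; apply: leq_ltn_trans L3.
Qed.

Lemma leq_card_bigcup (I : Type) (A : finType) (r : seq I) (P : pred I) (F : I -> {set A}) :
  #|\bigcup_(i <- r | P i) F i| <= \sum_(i <- r | P i) #|F i|.
Proof.
elim/big_rec2: _ => [|i n U _ leUn]; first by rewrite cards0.
by rewrite (leq_trans (leq_card_setU _ _).1) ?leq_add2l.
Qed.

Lemma pigeonhole_fibre (A B : finType) (P : {set A}) (f : A -> B) s :
  #|B| * s.-1 < #|P| -> exists b, s <= #|[set x in P | f x == b]|.
Proof.
move=> ltP; apply/existsP; move: ltP; apply: contraTT => /existsPn small.
rewrite -leqNgt -sum1_card (partition_big f xpredT) //= -sum_nat_const.
apply: leq_sum => b _; rewrite sum1dep_card.
by have := small b; rewrite -ltnNge; lia.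
Qed.

Lemma cycle_ordS (A : Type) (r : rel A) x (s : seq A) :
  path r x s -> r (last x s) x ->
  forall i : 'I_(size s).+1, r (nth x (x :: s) i) (nth x (x :: s) (ordS i)).
Proof.
move=> /pathP walk closing [i lti] /=.
have [lt_is | ->] : i < size s \/ i = size s by lia.
  by rewrite modn_small //; apply: walk.
by rewrite modnn -last_nth.
Qed.

Definition induced (A : finType) (r : rel A) (P : pred A) : rel {x | P x} :=
  fun x y => r (val x) (val y).
Arguments induced {A} r P.

Lemma colourable_hom (T' T : finType) (e' : rel T') (e : rel T) h k :
  is_hom e' e h -> colourable e k -> colourable e' k.
Proof. by move=> hom [c proper]; exists (c \o h) => u v /hom /proper. Qed.

Lemma colourable_card (T : finType) (e : rel T) k :
  irreflexive e -> #|T| <= k -> colourable e k.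
Proof.
move=> irr le_k; exists (fun v => widen_ord le_k (enum_rank v)) => u v uv.
apply: contraTneq uv => /(congr1 val) /= /val_inj /enum_rank_inj ->; by rewrite irr.
Qed.

Lemma chromatic_number_iff (T' T : finType) (e' : rel T') (e : rel T) chi :
  (forall k, colourable e k <-> colourable e' k) ->
  chromatic_number e chi <-> chromatic_number e' chi.
Proof.
move=> same; rewrite /chromatic_number same.
by split=> -[col least]; split=> // k /same; apply: least.
Qed.

Section Blowup.
Variables (T : finType) (e : rel T).
Hypotheses (e_sym : symmetric e) (e_irr : irreflexive e).

Local Notation arc := {p : T * T | e p.1 p.2}.

Definition arc_end (a : arc) (b : bool) : T := if b then (val a).2 else (val a).1.

Lemma arc_end_edge a b : e (arc_end a b) (arc_end a (~~ b)).
Proof. by case: a => [[u v] /= uv]; case: b; rewrite /arc_end //= e_sym. Qed.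

Lemma arc_end_neq a b : arc_end a b != arc_end a (~~ b).
Proof. by apply: contraTneq (arc_end_edge a b) => <-; rewrite e_irr. Qed.

Section Templates.
Variables (M N g : nat).

(* The dart [(i, a, b)] is the edge added by copy [i] for the arc [a], oriented from
   the end [b] of [a]; [flip] reverses it. *)
Local Notation dart := ('I_M * arc * bool)%type.
Local Notation template := {ffun 'I_M -> {ffun arc * bool -> 'I_N}}.
Implicit Types (w : template) (l : dart).

Definition flip l : dart := (l.1, ~~ l.2).

Definition level w l : 'I_N := w l.1.1 (l.1.2, l.2).

Definition tail w l : 'I_N * T := (level w l, arc_end l.1.2 l.2).

Definition blowup w : rel ('I_N * T) :=
  fun x y => [exists l, (tail w l == x) && (tail w (flip l) == y)].

Lemma flipK : involutive flip.
Proof. by case=> [ia b]; rewrite /flip negbK. Qed.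

Lemma same_edge_darts l l' : l.1 = l'.1 -> l' = l \/ l' = flip l.
Proof. by case: l l' => [ia b] [ia' b'] /= ->; case: b b' => -[]; auto. Qed.

Lemma blowup_sym w : symmetric (blowup w).
Proof.
suff imp x y : blowup w x y -> blowup w y x by move=> x y; apply/idP/idP => /imp.
by case/existsP=> l /andP[tl fl]; apply/existsP; exists (flip l); rewrite flipK tl fl.
Qed.

Lemma blowup_irr w : irreflexive (blowup w).
Proof.
move=> x; apply/existsP=> -[l /andP[/eqP <- /eqP /(congr1 snd) /eqP]].
by apply/negP; rewrite eq_sym; apply: arc_end_neq.
Qed.

Lemma blowup_hom w x y : blowup w x y -> e x.2 y.2.
Proof. by case/existsP=> l /andP[/eqP <- /eqP <-]; apply: arc_end_edge. Qed.

Definition closed_walk L w (t : {ffun 'I_L -> dart}) : bool :=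
  injectiveb (fun i => (t i).1) && [forall i, tail w (flip (t i)) == tail w (t (ordS i))].

Definition closed_walks L w : {set {ffun 'I_L -> dart}} := [set t | closed_walk w t].

Definition short_cycle_levels w : {set 'I_N} :=
  \bigcup_(3 <= L < g) \bigcup_(t in closed_walks L w) [set level w (t i) | i : 'I_L].

Lemma mem_short_cycle_levels w L (t : {ffun 'I_L -> dart}) i :
  2 < L < g -> closed_walk w t -> level w (t i) \in short_cycle_levels w.
Proof.
move=> L_short walk_t.
rewrite /short_cycle_levels (bigD1_seq L) ?mem_index_iota ?iota_uniq //= in_setU.
by apply/orP; left; apply/bigcupP; exists t; rewrite ?inE //; apply/imsetP; exists i.
Qed.

Lemma closed_walk_of_cycle w L (x : 'I_L -> 'I_N * T) :
  2 < L -> injective x -> (forall i, blowup w (x i) (x (ordS i))) ->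
  exists t : {ffun 'I_L -> dart}, closed_walk w t /\ forall i, tail w (t i) = x i.
Proof.
move=> L3 x_inj adj.
have : forall i, exists l, tail w l = x i /\ tail w (flip l) = x (ordS i).
  by move=> i; have /existsP[l /andP[/eqP tl /eqP fl]] := adj i; exists l.
case/fin_all_exists=> f fE.
exists [ffun i => f i]; split=> [|i]; last by rewrite ffunE (fE i).1.
apply/andP; split; last by apply/forallP => i; rewrite !ffunE (fE i).2 (fE _).1.
apply/injectiveP => a b; rewrite !ffunE => /same_edge_darts[fab | fab].
  by apply: x_inj; rewrite -(fE a).1 -(fE b).1 fab.
have b_next : b = ordS a by apply: x_inj; rewrite -(fE b).1 fab (fE a).2.
have a_next : a = ordS b by apply: x_inj; rewrite -(fE b).2 fab flipK (fE a).1.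
by have := ordS2_neq a L3; rewrite -b_next -a_next eqxx.
Qed.

Lemma girth_induced_blowup w :
  girth_at_least (induced (blowup w) (fun x => x.1 \notin short_cycle_levels w)) g.
Proof.
move=> [//|x s] [L3 [x_uniq [walk closing]]]; rewrite leqNgt; apply/negP => short.
pose xs (i : 'I_(size s).+1) := val (nth x (x :: s) i).
have xs_inj : injective xs.
  move=> i j /val_inj /eqP; rewrite nth_uniq // => /eqP; apply: ord_inj.
have [t [walk_t tailE]] := closed_walk_of_cycle L3 xs_inj (cycle_ordS walk closing).
have : level w (t ord0) \in short_cycle_levels w.
  by apply: mem_short_cycle_levels; rewrite ?L3.
rewrite -[level w _]/(tail w _).1 tailE; apply/negP.
exact: (valP (nth x (x :: s) ord0)).
Qed.

Lemma card_dart : #|{: dart}| = M * #|{: arc * bool}|.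
Proof. by rewrite !card_prod card_ord mulnA. Qed.

Lemma card_template : #|{: template}| = N ^ (M * #|{: arc * bool}|).
Proof. by rewrite !card_ffun !card_ord -expnM mulnC. Qed.

(* The level of the head of each dart of a closed walk is the level of the tail of the
   next dart, so the walk determines [w] from its values off the heads. *)
Lemma card_closed_walk_templates L (t : {ffun 'I_L -> dart}) :
  #|[set w | closed_walk w t]| * N ^ L <= #|{: template}|.
Proof.
have [t_inj | t_not_inj] := boolP (injectiveb (fun i => (t i).1)); last first.
  rewrite (_ : [set w | _] = set0) ?cards0 //.
  by apply/setP => w; rewrite !inE /closed_walk (negbTE t_not_inj).
have {}t_inj := injectiveP _ t_inj.
pose heads := [set flip (t i) | i : 'I_L].
have card_heads : #|heads| = L.
  by rewrite card_imset ?card_ord // => i j /(congr1 fst) /t_inj.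
have tail_notin_heads i : t i \notin heads.
  apply/imsetP=> -[j _ tij]; move: (tij) => /(congr1 fst) /t_inj ij.
  by move: tij; rewrite ij /flip; case: (t j) => ? [].
pose restr w := [ffun l : {l | l \notin heads} => level w (val l)].
have restr_inj : {in [set w | closed_walk w t] &, injective restr}.
  move=> w1 w2; rewrite !inE => /andP[_ /forallP walk1] /andP[_ /forallP walk2] /ffunP same.
  suff levelE l : level w1 l = level w2 l.
    by apply/ffunP => i; apply/ffunP => -[a b]; apply: (levelE (i, a, b)).
  have [l_head | l_tail] := boolP (l \in heads); last first.
    by have := same (Sub l l_tail); rewrite !ffunE.
  case/imsetP: l_head => i _ ->.
  move: (walk1 i) (walk2 i) => /eqP /(congr1 fst) /= -> /eqP /(congr1 fst) /= ->.
  by have := same (exist (fun l => l \notin heads) _ (tail_notin_heads (ordS i))); rewrite !ffunE.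
have := @leq_card_in _ _ restr _ restr_inj; rewrite card_ffun card_ord card_sig => le_restr.
rewrite card_template -card_dart -(cardsC heads) card_heads expnD mulnC leq_mul2l.
rewrite (leq_trans le_restr) ?orbT //; apply: eq_leq; congr (_ ^ _).
by apply: eq_card => l; rewrite !inE.
Qed.

Lemma sum_card_closed_walks L :
  (\sum_w #|closed_walks L w|) * N ^ L <= #|{: dart}| ^ L * #|{: template}|.
Proof.
have -> : \sum_w #|closed_walks L w|
          = \sum_(t : {ffun 'I_L -> dart}) #|[set w | closed_walk w t]|.
  under eq_bigr do rewrite -sum1dep_card.
  by rewrite (exchange_big_dep xpredT) //=; apply: eq_bigr => t _; rewrite sum1dep_card.
rewrite big_distrl /=.
apply: leq_trans (_ : _ <= \sum_(t : {ffun 'I_L -> dart}) #|{: template}|) _.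
  by apply: leq_sum => t _; apply: card_closed_walk_templates.
by rewrite sum_nat_const card_ffun card_ord.
Qed.

Definition short_cycle_count w : nat := \sum_(3 <= L < g) L * #|closed_walks L w|.

Lemma card_short_cycle_levels w : #|short_cycle_levels w| <= short_cycle_count w.
Proof.
apply: leq_trans (leq_card_bigcup _ _ _) _; apply: leq_sum => L _.
apply: leq_trans (leq_card_bigcup _ _ _) _; rewrite mulnC -sum_nat_const.
by apply: leq_sum => t _; apply: leq_trans (leq_imset_card _ _) _; rewrite card_ord.
Qed.

Lemma sum_short_cycle_count B : 0 < N -> #|{: dart}| = B * N ->
  \sum_w short_cycle_count w <= (\sum_(3 <= L < g) L * B ^ L) * #|{: template}|.
Proof.
move=> N_gt0 card_dart_B.
rewrite exchange_big big_distrl /=; apply: leq_sum => L _.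
rewrite -big_distrr -mulnA leq_mul2l; apply/orP; right.
rewrite -(@leq_pmul2r (N ^ L)) ?expn_gt0 ?N_gt0 //.
apply: leq_trans (sum_card_closed_walks L) _.
by rewrite card_dart_B expnMn mulnAC.
Qed.

Lemma few_templates_with_many_short_cycles B : 0 < N -> #|{: dart}| = B * N ->
  4 * (\sum_(3 <= L < g) L * B ^ L) < N ->
  2 * #|[set w | N < 2 * short_cycle_count w]| < #|{: template}|.
Proof.
move=> N_gt0 card_dart_B; set Q := \sum_(_ <= _ < _) _ => Q_small.
set bad := [set w | _].
have template_gt0 : 0 < #|{: template}| by rewrite card_template expn_gt0 N_gt0.
have : #|bad| * N.+1 <= 2 * (Q * #|{: template}|).
  apply: leq_trans (_ : \sum_(w in bad) 2 * short_cycle_count w <= _).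
    by rewrite -sum_nat_const; apply: leq_sum => w; rewrite inE.
  apply: leq_trans (_ : \sum_w 2 * short_cycle_count w <= _).
    by rewrite [leqRHS](bigID (mem bad)) leq_addr.
  by rewrite -big_distrr leq_mul2l sum_short_cycle_count.
nia.
Qed.

Definition has_copy_in w (S : {set 'I_N}) : bool := [exists i, w i \in ffun_on (mem S)].

Lemma card_copy_free S :
  #|[set w | ~~ has_copy_in w S]| = (N ^ #|{: arc * bool}| - #|S| ^ #|{: arc * bool}|) ^ M.
Proof.
pose copy_free := [predC ffun_on (mem S)] : pred {ffun arc * bool -> 'I_N}.
have -> : [set w | ~~ has_copy_in w S] = [set w | w \in ffun_on copy_free].
  apply/setP => w; rewrite !inE negb_exists; apply/forallP/ffun_onP => /= H i; exact: H.
rewrite cardsE card_ffun_on card_ord; congr (_ ^ _).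
have := cardC copy_free; rewrite card_ffun card_ord => <-.
suff -> : #|[predC copy_free]| = #|S| ^ #|{: arc * bool}| by rewrite addnK.
by rewrite -card_ffun_on; apply: eq_card => f; rewrite !inE negbK.
Qed.

Lemma card_templates_copy_free s :
  #|[set w | [exists S : {set 'I_N}, (s <= #|S|) && ~~ has_copy_in w S]]|
    <= 2 ^ N * (N ^ #|{: arc * bool}| - s ^ #|{: arc * bool}|) ^ M.
Proof.
set bound := (_ - _) ^ M.
have -> : [set w | [exists S : {set 'I_N}, (s <= #|S|) && ~~ has_copy_in w S]] =
    \bigcup_(S : {set 'I_N} | s <= #|S|) [set w | ~~ has_copy_in w S].
  apply/setP => w; rewrite inE; apply/existsP/bigcupP => [[S /andP[sS free]] | [S sS]].
    by exists S; rewrite ?inE.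
  by rewrite inE => free; exists S; rewrite sS.
apply: leq_trans (leq_card_bigcup _ _ _) _.
apply: leq_trans (_ : _ <= \sum_(S : {set 'I_N}) bound) _; last first.
  by rewrite sum_nat_const -cardsT -powersetT card_powerset cardsT card_ord.
rewrite [leqRHS](bigID [pred S : {set 'I_N} | s <= #|S|]) /=.
apply: leq_trans (leq_addr _ _); apply: leq_sum => S sS.
by rewrite card_copy_free leq_wexp2r // leq_sub2l // leq_wexp2r.
Qed.

Lemma few_copy_free_templates K s : 0 < K -> 0 < s -> N = 2 * K * s ->
  M = 2 * (2 * K) ^ #|{: arc * bool}| * N ->
  2 * #|[set w | [exists S : {set 'I_N}, (s <= #|S|) && ~~ has_copy_in w S]]|
    < #|{: template}|.
Proof.
move=> K_gt0 s_gt0 N_def M_def; set c := #|{: arc * bool}| in M_def *.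
set D := (2 * K) ^ c in M_def.
have D_gt0 : 0 < D by rewrite expn_gt0 muln_gt0 K_gt0.
have N2 : 2 <= N by rewrite N_def -mulnA -{1}[2]muln1 leq_mul2l muln_gt0 K_gt0.
apply: leq_ltn_trans (leq_mul (leqnn 2) (card_templates_copy_free s)) _.
have Nc : N ^ c = D * s ^ c by rewrite N_def expnMn.
rewrite card_template (mulnC M) expnM !Nc -{2}[s ^ c]mul1n -mulnBl !expnMn.
rewrite !mulnA ltn_pmul2r ?expn_gt0 ?s_gt0 //.
by rewrite M_def -(prednK D_gt0) subn1 (expn_decay_lt _ N2).
Qed.

Lemma good_template K s : 0 < K -> 0 < s -> N = 2 * K * s ->
  M = 2 * (2 * K) ^ #|{: arc * bool}| * N ->
  4 * (\sum_(3 <= L < g) L * (2 * (2 * K) ^ #|{: arc * bool}| * #|{: arc * bool}|) ^ L) < N ->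
  exists w, 2 * #|short_cycle_levels w| <= N /\
            forall S : {set 'I_N}, s <= #|S| -> has_copy_in w S.
Proof.
move=> K_gt0 s_gt0 N_def M_def Q_small.
have N_gt0 : 0 < N by rewrite N_def !muln_gt0 K_gt0.
have card_dart_B : #|{: dart}| = 2 * (2 * K) ^ #|{: arc * bool}| * #|{: arc * bool}| * N.
  by rewrite card_dart M_def mulnAC.
have := few_templates_with_many_short_cycles N_gt0 card_dart_B Q_small.
have := few_copy_free_templates K_gt0 s_gt0 N_def M_def.
set bad1 := [set w | _ < _]; set bad2 := [set w | [exists S, _]] => small2 small1.
have : #|bad1 :|: bad2| < #|{: template}|.
  by apply: leq_ltn_trans (leq_card_setU _ _).1 _; lia.
rewrite -(cardsC (bad1 :|: bad2)) -[X in X < _]addn0 ltn_add2l card_gt0 => /set0Pn[w].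
rewrite !inE negb_or -leqNgt => /andP[few_short /existsPn large_copy].
exists w; split.
  by rewrite (leq_trans _ few_short) // leq_mul2l card_short_cycle_levels orbT.
by move=> S sS; have := large_copy S; rewrite sS negbK.
Qed.

Section LevelPattern.
Variables (D : {set 'I_N}) (k : nat).
Local Notation vertex := {x : 'I_N * T | x.1 \notin D}.
Variable c' : vertex -> 'I_k.

(* [None] on the deleted levels, where [c'] is undefined. *)
Definition level_pattern (x : 'I_N) : {ffun T -> option 'I_k} :=
  [ffun v => omap c' (insub (x, v))].

Lemma level_pattern_eq x y v (y_in : y \notin D) :
  level_pattern x = level_pattern y ->
  exists x_in : x \notin D, c' (exist _ (x, v) x_in) = c' (exist _ (y, v) y_in).
Proof.
move=> /ffunP /(_ v); rewrite !ffunE (@insubT _ _ vertex (y, v) y_in).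
case/orP: (orbN (x \notin D)) => [x_in | x_out]; last first.
  by rewrite (@insubF _ _ vertex (x, v)) ?(negbTE x_out).
by rewrite (@insubT _ _ vertex (x, v) x_in) => -[]; exists x_in.
Qed.

Lemma proper_colouring_of_copy w i y (y_in : y \notin D) :
  proper_colouring (induced (blowup w) (fun x => x.1 \notin D)) c' ->
  (forall a, level_pattern (w i a) = level_pattern y) ->
  proper_colouring e (fun v => c' (exist _ (y, v) y_in)).
Proof.
move=> proper same_pattern u v uv; pose a : arc := exist _ (u, v) uv.
have [u_in <-] := level_pattern_eq u y_in (same_pattern (a, false)).
have [v_in <-] := level_pattern_eq v y_in (same_pattern (a, true)).
apply: proper; apply/existsP; exists (i, a, false).
by rewrite /tail /level /arc_end /= !eqxx.
Qed.

Lemma pullback_colouring w s : 0 < s ->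
  proper_colouring (induced (blowup w) (fun x => x.1 \notin D)) c' ->
  (forall S : {set 'I_N}, s <= #|S| -> has_copy_in w S) ->
  k.+1 ^ #|T| * s.-1 < #|~: D| ->
  exists y (y_in : y \notin D), proper_colouring e (fun v => c' (exist _ (y, v) y_in)).
Proof.
move=> s_gt0 proper has_copy many_kept.
have [f large_class] : exists f, s <= #|[set x in ~: D | level_pattern x == f]|.
  by apply: pigeonhole_fibre; rewrite card_ffun card_option card_ord.
have [i /ffun_onP copy_in] := existsP (has_copy _ large_class).
have [y] : exists y, y \in [set x in ~: D | level_pattern x == f].
  by apply/set0Pn; rewrite -card_gt0 (leq_trans s_gt0 large_class).
rewrite !inE => /andP[y_in /eqP y_pattern]; exists y, y_in.
apply: (proper_colouring_of_copy (i := i)) proper _ => a.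
by move: (copy_in a); rewrite inE -y_pattern => /andP[_ /eqP].
Qed.

End LevelPattern.

End Templates.

Lemma blowup_high_girth g kmax :
  exists (T' : finType) (e' : rel T') (h : T' -> T),
    simple_graph e' /\ girth_at_least e' g /\ is_hom e' e h /\
    (forall v, exists u, h u = v) /\
    (forall k, k <= kmax -> forall c' : T' -> 'I_k, proper_colouring e' c' ->
       exists c : T -> 'I_k, proper_colouring e c /\ forall v, exists u, h u = v /\ c' u = c v).
Proof.
pose c := #|{: arc * bool}|; pose K := kmax.+1 ^ #|T|.
pose s := (4 * \sum_(3 <= L < g) L * (2 * (2 * K) ^ c * c) ^ L).+1.
pose N := 2 * K * s.
have K_gt0 : 0 < K by rewrite expn_gt0.
have Q_small : s.-1 < N by apply: leq_pmull; rewrite muln_gt0 K_gt0.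
have [w [few_deleted has_copy]] :=
  @good_template (2 * (2 * K) ^ c * N) N g K s K_gt0 (ltn0Sn _) erefl erefl Q_small.
pose D := short_cycle_levels g w.
have many_kept : K * s <= #|~: D|.
  by move: few_deleted (cardsC D); rewrite card_ord -/D /N; lia.
have [y0] : exists y0, y0 \in ~: D.
  by apply/set0Pn; rewrite -card_gt0 (leq_trans _ many_kept) // muln_gt0 K_gt0.
rewrite inE => y0_in.
exists {x : 'I_N * T | x.1 \notin D}, (induced (blowup w) (fun x => x.1 \notin D)).
exists (fun x => (val x).2).
split; first by split=> [x z | x]; [apply: blowup_sym | apply: blowup_irr].
split; first exact: girth_induced_blowup.
split; first by move=> x z; apply: blowup_hom.
split; first by move=> v; exists (exist _ (y0, v) y0_in).
move=> k le_k c' proper.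
have few_patterns : k.+1 ^ #|T| * s.-1 < #|~: D|.
  apply: leq_trans many_kept; rewrite (leq_ltn_trans (_ : _ <= K * s.-1)) ?ltn_pmul2l //.
  by rewrite leq_mul2r leq_wexp2r ?orbT.
have [y [y_in proper_y]] := pullback_colouring (ltn0Sn _) proper has_copy few_patterns.
by exists (fun v => c' (exist _ (y, v) y_in)); split=> // v; exists (exist _ (y, v) y_in).
Qed.

End Blowup.

Theorem mainTheorem7 (T : finType) (e : rel T) (g k : nat) :
  simple_graph e -> 0 < g -> 0 < k ->
  exists (T' : finType) (e' : rel T') (h : T' -> T),
    simple_graph e' /\
    girth_at_least e' g /\
    is_hom e' e h /\
    (forall v : T, exists u : T', h u = v) /\
    (forall c' : T' -> 'I_k, proper_colouring e' c' ->
       exists c : T -> 'I_k, proper_colouring e c /\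
         (forall v : T, exists u : T', h u = v /\ c' u = c v)) /\
    (forall chi : nat, chromatic_number e chi <-> chromatic_number e' chi).
Proof.
move=> [e_sym e_irr] _ _.
have [T' [e' [h [simple' [girth' [hom [onto lift]]]]]]] :=
  blowup_high_girth e_sym e_irr g (maxn k #|T|).
exists T', e', h; do 4 (split=> //); split; first exact: lift (leq_maxl _ _).
move=> chi; apply: chromatic_number_iff => m; split; first exact: colourable_hom hom.
case=> c' proper'; have [le_m | lt_m] := leqP m (maxn k #|T|).
  by have [c [proper _]] := lift m le_m c' proper'; exists c.
by apply: colourable_card e_irr _; apply: leq_trans (leq_maxr k _) (ltnW lt_m).
Qed.
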